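(* Let $\mathcal{A}$ be a unital algebra, $\tau:\mathcal{A}\to\mathbb{C}$ a unital linear functional and $\tau':\mathcal{A}\to\mathbb{C}$ a linear functional with $\tau'(1)=0$, and let $\mathcal{A}_1,\mathcal{A}_2$ be two unital subalgebras which are infinitesimally free with respect to $(\tau,\tau')$. Let $\mathcal{I}$ be an ideal of $\mathcal{A}$ with $\mathcal{I}\subset \ker(\tau)$. Then $(\mathcal{A}_1,\mathcal{I}\cap \mathcal{A}_1)$ and $(\mathcal{A}_2,\mathcal{I}\cap \mathcal{A}_2)$ are free of type $B$ in $(\mathcal{A},\tau,\mathcal{I},\tau'|_{\mathcal{I}})$.
   Context: Infinitesimal freeness w.r.t. $(\tau,\tau')$: whenever $a_j\in\mathcal{A}_{i_j}$ with consecutive indices different and $\tau(a_j)=0$ for all $j$, $\tau(a_1\cdots a_n)=0$ and $\tau'(a_1\cdots a_n)=\sum_{j=1}^n\tau(a_1\cdots a_{j-1}\tau'(a_j)a_{j+1}\cdots a_n)$. Freeness of type $B$ in $(\mathcal{A},\tau,\mathcal{I},\phi)$ with $\phi:\mathcal{I}\to\mathbb{C}$ linear, for pairs $(\mathcal{A}_h,V_h)$ with $V_h\subset\mathcal{I}$ a subspace stable under two-sided multiplication by $\mathcal{A}_h$: $\mathcal{A}_1,\mathcal{A}_2$ are free w.r.t. $\tau$, and whenever $a_n\in\mathcal{A}_{i_n},\dots,a_1\in\mathcal{A}_{i_1}$, $v\in V_h$, $b_1\in\mathcal{A}_{j_1},\dots,b_m\in\mathcal{A}_{j_m}$ with any two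 consecutive indices in $i_n,\dots,i_1,h,j_1,\dots,j_m$ different and all $a_r,b_s$ centered for $\tau$, $\phi(a_n\cdots a_1vb_1\cdots b_m)=\tau(a_nb_m)\cdots\tau(a_1b_1)\phi(v)$ if $n=m$ and $i_r=j_r$ for all $r$, and $=0$ otherwise. *)

From HB Require Import structures.
From mathcomp Require Import all_boot all_order all_algebra.
From mathcomp Require Import reals complex.
Set Implicit Arguments. Unset Strict Implicit. Unset Printing Implicit Defensive.
Import Order.TTheory GRing.Theory Num.Theory.
Local Open Scope ring_scope.

(* Indices {1,2} are encoded by bool (false = 1, true = 2).
   A finite word x_1 ... x_n is encoded by a function nat -> _ read on 0..n-1. *)

Section Defs.
Variables (K : fieldType) (A : algType K).

Definition two_sided_ideal (I : {pred A}) : Prop :=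
  zmod_closed I /\ (forall a x, x \in I -> a * x \in I /\ x * a \in I).

Definition alternating (n : nat) (ind : nat -> bool) : Prop :=
  forall r : nat, (r.+1 < n)%N -> ind r != ind r.+1.

Definition free_wrt (tau : A -> K) (B : bool -> {pred A}) : Prop :=
  forall (n : nat) (ind : nat -> bool) (a : nat -> A),
    (0 < n)%N -> alternating n ind ->
    (forall j, (j < n)%N -> a j \in B (ind j)) ->
    (forall j, (j < n)%N -> tau (a j) = 0) ->
    tau (\prod_(j < n) a j) = 0.

Definition inf_free (tau tau' : A -> K) (B : bool -> {pred A}) : Prop :=
  forall (n : nat) (ind : nat -> bool) (a : nat -> A),
    (0 < n)%N -> alternating n ind ->
    (forall j, (j < n)%N -> a j \in B (ind j)) ->
    (forall j, (j < n)%N -> tau (a j) = 0) ->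
    tau (\prod_(j < n) a j) = 0 /\
    tau' (\prod_(j < n) a j) =
      \sum_(j < n) tau ((\prod_(k < n | (k < j)%N) a k)
                        * (tau' (a j) *: 1)
                        * (\prod_(k < n | (j < k)%N) a k)).

(* freeness of type B of the pairs (B h, V h), h : bool, in (A, tau, I, phi);
   phi is only evaluated on elements of I. Words a_n ... a_1 are encoded as
   a (n-1), ..., a 0, i.e. a_r = a (r-1), with indices ia. *)
Definition free_typeB (tau : A -> K) (I : {pred A}) (phi : A -> K)
    (B V : bool -> {pred A}) : Prop :=
  (forall h, {subset V h <= I} /\ submod_closed (V h) /\
     (forall a v, a \in B h -> v \in V h -> a * v \in V h /\ v * a \in V h))
  /\ free_wrt tau B
  /\ forall (h : bool) (n m : nat) (ia : nat -> bool) (a : nat -> A)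
            (v : A) (jb : nat -> bool) (b : nat -> A),
       alternating n ia -> alternating m jb ->
       ((0 < n)%N -> ia 0%N != h) -> ((0 < m)%N -> jb 0%N != h) ->
       (forall r, (r < n)%N -> a r \in B (ia r)) ->
       (forall r, (r < m)%N -> b r \in B (jb r)) ->
       (forall r, (r < n)%N -> tau (a r) = 0) ->
       (forall r, (r < m)%N -> tau (b r) = 0) ->
       v \in V h ->
       phi ((\prod_(r < n) a (n - r.+1)%N) * v * (\prod_(r < m) b r)) =
       if (n == m) && [forall r : 'I_n, ia r == jb r]
       then (\prod_(r < n) tau (a r * b r)) * phi v
       else 0.

End Defs.

From HB Require Import structures.
From mathcomp Require Import all_boot all_order all_algebra.
From mathcomp Require Import reals complex.
From mathcomp Require Import zify.
Set Implicit Arguments. Unset Strict Implicit. Unset Printing Implicit Defensive.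
Import Order.TTheory GRing.Theory Num.Theory.
Local Open Scope ring_scope.
Local Open Scope complex_scope.

(* The word a_n ... a_1 v b_1 ... b_m is alternating and centred (v is centred
   because I lies in ker tau), so infinitesimal freeness writes tau' of it as a
   sum of terms tau(w_1 ... tau'(w_j) ... w_N). Every term with w_j <> v still
   contains v, hence lies in the ideal I and is killed by tau; the remaining
   term is tau'(v) tau(a_n ... a_1 b_1 ... b_m). For free A_1, A_2 this last
   moment is prod_r tau(a_r b_r) when the index sequences agree and 0
   otherwise: split a_1 b_1 = (a_1 b_1 - tau(a_1 b_1)) + tau(a_1 b_1), where
   the centred part yields an alternating centred word, and induct. *)

Section Words.
Variable T : Type.
Implicit Types (a b : nat -> T) (x : T).

Definition wcat n a b k := if (k < n)%N then a k else b (k - n)%N.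
Definition wrev n a k := a (n - k.+1)%N.
Definition wcons x a k := if k is k'.+1 then a k' else x.

Lemma wcat_cons_at n a x b : wcat n a (wcons x b) n = x.
Proof. by rewrite /wcat ltnn subnn. Qed.

End Words.

Lemma alternating_behead n ia :
  alternating n.+1 ia -> alternating n (fun k => ia k.+1).
Proof. by move=> alt r lt_r; apply: alt. Qed.

Lemma alternating_cons n h ia :
  alternating n ia -> ((0 < n)%N -> ia 0%N != h) -> alternating n.+1 (wcons h ia).
Proof.
move=> alt ia0 [|r] /= lt_r; last exact: alt.
by rewrite eq_sym; apply: ia0.
Qed.

Lemma alternating_rev n ia : alternating n ia -> alternating n (wrev n ia).
Proof.
move=> alt r lt_r; rewrite /wrev.
have -> : (n - r.+1 = (n - r.+2).+1)%N by lia.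
by rewrite eq_sym; apply: alt; lia.
Qed.

Lemma alternating_cat n m ia jb :
  alternating n ia -> alternating m jb ->
  ((0 < n)%N -> (0 < m)%N -> ia n.-1 != jb 0%N) ->
  alternating (n + m) (wcat n ia jb).
Proof.
move=> alt_a alt_b junction r lt_r; rewrite /wcat.
case: (ltnP r.+1 n) => [lt_r1n|le_nr1]; first by rewrite (ltnW lt_r1n) alt_a.
case: (ltnP r n) => [lt_rn|le_nr].
  have e : n = r.+1 by lia.
  by rewrite e subnn in junction *; apply: junction; lia.
by rewrite subSn //; apply: alt_b; lia.
Qed.

Section WordProducts.
Variable R : pzSemiRingType.
Implicit Types (a b : nat -> R) (x : R).

Lemma big_wcat n m a b :
  \prod_(k < n + m) wcat n a b k = \prod_(k < n) a k * \prod_(k < m) b k.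
Proof.
rewrite big_split_ord; congr (_ * _); apply: eq_bigr => k _; rewrite /wcat /=.
  by rewrite ltn_ord.
by rewrite ltnNge leq_addr addKn.
Qed.

Lemma big_wcat_cons n m a x b :
  \prod_(k < n + m.+1) wcat n a (wcons x b) k =
  \prod_(k < n) a k * x * \prod_(k < m) b k.
Proof. by rewrite big_wcat big_ord_recl mulrA. Qed.

Lemma big_wcat_ltn n m a b :
  \prod_(k < n + m | (k < n)%N) wcat n a b k = \prod_(k < n) a k.
Proof.
rewrite big_split_ord /= [X in _ * X]big_pred0 => [|k]; last by rewrite ltnNge leq_addr.
by rewrite mulr1; apply: eq_big => k; rewrite /= ?ltn_ord // /wcat /= ltn_ord.
Qed.

Lemma big_wcat_cons_gtn n m a x b :
  \prod_(k < n + m.+1 | (n < k)%N) wcat n a (wcons x b) k = \prod_(k < m) b k.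
Proof.
rewrite big_split_ord /= big_pred0 => [|k]; last by rewrite ltnNge ltnW.
rewrite mul1r big_mkcond big_ord_recl /= addn0 ltnn mul1r.
apply: eq_bigr => k _.
by rewrite /bump /= addnS ltnS leq_addr /wcat ltnNge -addnS leq_addr addKn.
Qed.

Lemma big_wrevS n a :
  \prod_(k < n.+1) wrev n.+1 a k = \prod_(k < n) wrev n (fun k => a k.+1) k * a 0%N.
Proof.
rewrite big_ord_recr /= /wrev subnn; congr (_ * _); apply: eq_bigr => k _.
by rewrite subSS; case: n k => [[]//|n] k; rewrite subSn // -ltnS.
Qed.

End WordProducts.

Lemma forall_ord_recl n (P : nat -> bool) :
  [forall r : 'I_n.+1, P r] = P 0%N && [forall r : 'I_n, P r.+1].
Proof.
apply/forallP/andP => [P_all|[P0 /forallP P_S] [[|r] lt_r] //].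
  by split; [apply: (P_all ord0)|apply/forallP => r; apply: (P_all (lift ord0 r))].
exact: (P_S (Ordinal (lt_r : (r < n)%N))).
Qed.

Section CenteredWords.
Variables (K : fieldType) (A : algType K) (tau : {scalar A}) (B : bool -> {pred A}).

Definition centered_word n (ind : nat -> bool) (a : nat -> A) : Prop :=
  [/\ alternating n ind, forall j, (j < n)%N -> a j \in B (ind j)
    & forall j, (j < n)%N -> tau (a j) = 0].

Lemma centered_word_behead n ind a :
  centered_word n.+1 ind a -> centered_word n (fun k => ind k.+1) (fun k => a k.+1).
Proof.
case=> alt aB a0; split=> [|j lt_j|j lt_j]; last by apply: a0.
  exact: alternating_behead.
by apply: aB.
Qed.

Lemma centered_word_cons n ind a h x :
  centered_word n ind a -> ((0 < n)%N -> ind 0%N != h) -> x \in B h -> tau x = 0 ->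
  centered_word n.+1 (wcons h ind) (wcons x a).
Proof.
case=> alt aB a0 ind0 xB x0.
by split=> [|[|j] lt_j|[|j] lt_j] //=; [apply: alternating_cons|apply: aB|apply: a0].
Qed.

Lemma centered_word_rev n ind a :
  centered_word n ind a -> centered_word n (wrev n ind) (wrev n a).
Proof.
case=> alt aB a0; split=> [|j lt_j|j lt_j]; first exact: alternating_rev.
  by apply: aB; lia.
by apply: a0; lia.
Qed.

Lemma centered_word_cat n m ia a jb b :
  centered_word n ia a -> centered_word m jb b ->
  ((0 < n)%N -> (0 < m)%N -> ia n.-1 != jb 0%N) ->
  centered_word (n + m) (wcat n ia jb) (wcat n a b).
Proof.
case=> alt_a aB a0 [alt_b bB b0] junction.
split=> [|j lt_j|j lt_j]; first exact: alternating_cat.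
  by rewrite /wcat; case: ifP => lt_jn; [apply: aB|apply: bB; lia].
by rewrite /wcat; case: ifP => lt_jn; [apply: a0|apply: b0; lia].
Qed.

Hypotheses (tau1 : tau 1 = 1) (B_subalg : forall h, subalg_closed (B h))
  (B_free : free_wrt tau B).

Lemma free_tau_rev_cat_eq0 n m ia a jb b :
  centered_word n ia a -> centered_word m jb b ->
  ((0 < n)%N -> (0 < m)%N -> ia 0%N != jb 0%N) -> (0 < n + m)%N ->
  tau (\prod_(k < n) wrev n a k * \prod_(k < m) b k) = 0.
Proof.
move=> wa wb junction nm_gt0; rewrite -big_wcat.
have rev_junction : (0 < n)%N -> (0 < m)%N -> wrev n ia n.-1 != jb 0%N.
  by move=> n_gt0; rewrite /wrev prednK // subnn; apply: junction.
by have [] := centered_word_cat (centered_word_rev wa) wb rev_junction; apply: B_free.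
Qed.

Lemma free_tau_rev_cat n m ia a jb b :
  centered_word n ia a -> centered_word m jb b ->
  tau (\prod_(k < n) wrev n a k * \prod_(k < m) b k) =
  if (n == m) && [forall r : 'I_n, ia r == jb r]
  then \prod_(r < n) tau (a r * b r) else 0.
Proof.
elim: n m ia a jb b => [|n IHn] [|m] ia a jb b wa wb.
- by rewrite !big_ord0 mulr1 tau1 /=; case: forallP => // -[] [].
- by rewrite (free_tau_rev_cat_eq0 wa wb).
- by rewrite (free_tau_rev_cat_eq0 wa wb).
have [ia0_jb0|ia0_jb0] := eqVneq (ia 0%N) (jb 0%N); last first.
  rewrite (free_tau_rev_cat_eq0 wa wb) //.
  by case: forallP => [/(_ ord0)|]; rewrite ?andbF ?(negbTE ia0_jb0).
set t := tau (a 0%N * b 0%N).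
set c := a 0%N * b 0%N - t *: 1.
have cB : c \in B (ia 0%N).
  have [B1 Blin Bmul] := B_subalg (ia 0%N).
  have [[_ aB _] [_ bB _]] := (wa, wb).
  rewrite /c addrC -scaleNr; apply: Blin => //; apply: Bmul; first exact: aB.
  by rewrite ia0_jb0; apply: bB.
have c0 : tau c = 0 by rewrite linearB linearZ /= tau1 mulr1 subrr.
have split_ab : a 0%N * b 0%N = c + t *: 1 by rewrite subrK.
set P := \prod_(k < n) wrev n (fun k => a k.+1) k.
set Q := \prod_(k < m) b k.+1.
have -> : \prod_(k < n.+1) wrev n.+1 a k * \prod_(k < m.+1) b k =
          P * c * Q + t *: (P * Q).
  rewrite big_wrevS big_ord_recl /= -/P -/Q mulrA -(mulrA P) split_ab.
  by rewrite mulrDr mulrDl mulr_algr -scalerAl.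
have wa' := centered_word_behead wa; have wb' := centered_word_behead wb.
have PcQ0 : tau (P * c * Q) = 0.
  have -> : P * c = \prod_(k < n.+1) wrev n.+1 (wcons c (fun k => a k.+1)) k.
    by rewrite big_wrevS.
  have [[alt_a _ _] [alt_b _ _]] := (wa, wb).
  apply: (free_tau_rev_cat_eq0 (centered_word_cons wa' _ cB c0) wb') => //.
    by move=> n_gt0; rewrite eq_sym; apply: alt_a.
  by move=> _ m_gt0; rewrite /= ia0_jb0; apply: alt_b.
rewrite linearD linearZ /= PcQ0 add0r (IHn _ _ _ _ _ wa' wb') eqSS.
rewrite (forall_ord_recl n (fun k => ia k == jb k)) ia0_jb0 eqxx big_ord_recl /=.
by case: ifP; rewrite ?mulr0.
Qed.

End CenteredWords.

Section Ideals.
Variables (K : fieldType) (A : algType K) (I : {pred A}).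
Hypothesis I_ideal : two_sided_ideal I.

Lemma ideal_scale k x : x \in I -> k *: x \in I.
Proof. by move=> xI; rewrite -mulr_algl; case: I_ideal => _ /(_ k%:A x xI) []. Qed.

Lemma ideal_add x y : x \in I -> y \in I -> x + y \in I.
Proof.
case: I_ideal => -[I0 I_sub] _ xI yI.
by rewrite -[y]opprK -[- y]sub0r I_sub // I_sub.
Qed.

Lemma ideal_subalg_submod (S : {pred A}) :
  subalg_closed S -> submod_closed [predI I & S].
Proof.
case=> S1 S_lin _; case: I_ideal => -[I0 _] _.
have S0 : 0 \in S by rewrite -(addNr 1) -scaleN1r S_lin.
split=> [|k u v /andP[uI uS] /andP[vI vS]]; rewrite inE ?I0 ?S0 //.
by rewrite ideal_add ?ideal_scale ?S_lin.
Qed.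

Lemma ideal_subalg_mul_stable (S : {pred A}) a v :
  subalg_closed S -> a \in S -> v \in [predI I & S] ->
  a * v \in [predI I & S] /\ v * a \in [predI I & S].
Proof.
case=> _ _ S_mul aS /andP[vI vS]; case: I_ideal => _ /(_ a v vI) [avI vaI].
by rewrite !inE avI vaI !S_mul.
Qed.

Lemma prod_mem_ideal (T : eqType) (s : seq T) (P : pred T) (F : T -> A) x :
  x \in s -> P x -> F x \in I -> \prod_(i <- s | P i) F i \in I.
Proof.
case: I_ideal => _ I_mul; elim: s => [//|y s IHs].
rewrite inE big_cons => /orP[/eqP <-|xs] Px FxI.
  by rewrite Px; case: (I_mul (\prod_(j <- s | P j) F j) _ FxI).
by case: ifP => _; [case: (I_mul (F y) _ (IHs xs Px FxI))|apply: IHs].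
Qed.

Variables (tau : {scalar A}) (tau' : A -> K).
Hypothesis tau_I : forall x, x \in I -> tau x = 0.

Lemma infinitesimal_sum_ideal N (w : nat -> A) p : (p < N)%N -> w p \in I ->
  \sum_(j < N) tau (\prod_(k < N | (k < j)%N) w k * (tau' (w j) *: 1)
                    * \prod_(k < N | (j < k)%N) w k) =
  tau' (w p) * tau (\prod_(k < N | (k < p)%N) w k * \prod_(k < N | (p < k)%N) w k).
Proof.
move=> lt_pN wpI; have wp_in (P : pred 'I_N) : P (Ordinal lt_pN) ->
    \prod_(k < N | P k) w k \in I.
  by move=> Pp; apply: (prod_mem_ideal (x := Ordinal lt_pN)) => //; apply: mem_index_enum.
rewrite (bigD1 (Ordinal lt_pN)) //= [X in _ + X]big1 => [|j /= ne_jp].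
  by rewrite addr0 mulr_algr -scalerAl linearZ.
case: I_ideal => _ I_mul; apply: tau_I.
have [lt_jp|lt_pj|eq_jp] := ltngtP j p; last by rewrite -val_eqE /= eq_jp eqxx in ne_jp.
  exact: (I_mul _ _ (wp_in (fun k => j < k)%N lt_jp)).1.
exact: (I_mul _ _ (I_mul _ _ (wp_in (fun k => k < j)%N lt_pj)).2).2.
Qed.

End Ideals.

Lemma inf_free_free (K : fieldType) (A : algType K) (tau tau' : A -> K)
    (B : bool -> {pred A}) :
  inf_free tau tau' B -> free_wrt tau B.
Proof. by move=> B_inf n ind a n_gt0 alt aB a0; have [] := B_inf n ind a n_gt0 alt aB a0. Qed.

Theorem proposition2p8 (R : realType) (A : algType R[i])
    (tau tau' : {scalar A}) (B : bool -> {pred A}) (I : {pred A}) :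
  tau 1 = 1 -> tau' 1 = 0 ->
  (forall h, subalg_closed (B h)) ->
  inf_free tau tau' B ->
  two_sided_ideal I ->
  (forall x, x \in I -> tau x = 0) ->
  free_typeB tau I tau' B (fun h => [predI I & B h]).
Proof.
move=> tau1 _ B_subalg B_inf I_ideal tau_I.
have B_free := inf_free_free B_inf.
split; last split => // h n m ia a v jb b ia_alt jb_alt ia_h jb_h aB bB a0 b0 /andP[vI vB].
  move=> h; split; first by move=> x /andP[].
  split; first exact: ideal_subalg_submod.
  by move=> x u; apply: ideal_subalg_mul_stable.
have wa : centered_word tau B n ia a by [].
have wb : centered_word tau B m jb b by [].
have [W_alt WB W0] : centered_word tau B (n + m.+1)
    (wcat n (wrev n ia) (wcons h jb)) (wcat n (wrev n a) (wcons v b)).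
  apply: centered_word_cat (centered_word_rev wa) (centered_word_cons wb _ vB _) _.
  - exact: jb_h.
  - exact: tau_I.
  - by move=> n_gt0 _; rewrite /wrev prednK // subnn ia_h.
rewrite -(big_wcat_cons _ _ (wrev n a)).
have [_ ->] := B_inf _ _ _ (ltn_addl n (ltn0Sn m)) W_alt WB W0.
rewrite (infinitesimal_sum_ideal I_ideal tau' tau_I (p := n)) ?wcat_cons_at //; last first.
  by rewrite addnS ltnS leq_addr.
rewrite big_wcat_ltn big_wcat_cons_gtn (free_tau_rev_cat tau1 B_subalg B_free wa wb).
by case: ifP; rewrite ?mulr0 // mulrC.
Qed.
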